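(* Let $(\mathfrak g,\Delta)$ be a quasitriangular Hom-Lie bialgebra, where $(\mathfrak{g},[\cdot,\cdot]_{\mathfrak{g}},\phi_{\mathfrak{g}})$ is finite-dimensional and $\Delta(x)=(\mathrm{ad}_x\otimes\phi_{\mathfrak g}+\phi_{\mathfrak g}\otimes\mathrm{ad}_x)r$ for a solution $r$ of the classical Hom-Yang-Baxter equation with $(\phi_{\mathfrak g}\otimes\mathrm{Id})r=(\mathrm{Id}\otimes\phi_{\mathfrak g})r$. Then $r^\sharp\phi_{\mathfrak g}^*:\mathfrak g^*\to\mathfrak g$ is a homomorphism of Hom-Lie algebras from $(\mathfrak g^*,[\cdot,\cdot]_{\mathfrak g^*},\phi_{\mathfrak g}^* )$ to $(\mathfrak{g},[\cdot,\cdot]_{\mathfrak{g}},\phi_{\mathfrak{g}})$, where $\langle[a,b]_{\mathfrak g^*},x\rangle=\langle\Delta(x),a\otimes b\rangle$.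
   Context: A Hom-Lie algebra $(\mathfrak{h},[\cdot,\cdot]_{\mathfrak{h}},\phi_{\mathfrak{h}})$: skew-symmetric bilinear bracket and linear map with $\phi_{\mathfrak h}[x,y]=[\phi_{\mathfrak h}x,\phi_{\mathfrak h}y]$ and $[\phi_{\mathfrak h}(x),[y,z]]+[\phi_{\mathfrak h}(y),[z,x]]+[\phi_{\mathfrak h}(z),[x,y]]=0$; weakly involutive if $[\phi_{\mathfrak h}^2(x),y]=[x,y]$. A homomorphism $f:\mathfrak h\to\mathfrak k$ of Hom-Lie algebras satisfies $f[x,y]=[f(x),f(y)]$ and $f\phi_{\mathfrak h}=\phi_{\mathfrak k}f$. $\mathrm{ad}_xy=[x,y]$; for $t\in\mathfrak g\otimes\mathfrak g$, $\mathrm{ad}_zt=(\mathrm{ad}_z\otimes\phi_{\mathfrak g}+\phi_{\mathfrak g}\otimes\mathrm{ad}_z)t$. $r^\sharp:\mathfrak g^*\to\mathfrak g$, $\langle r^\sharp(a),b\rangle=\langle r,a\otimes b\rangle$. For $r=\sum_ix_i\otimes y_i$, $[r,r]_{\mathfrak g}=\sum_{i,j}([x_i,x_j]\otimes\phi_{\mathfrak g}(y_i)\otimes\phi_{\mathfrak g}(y_j)+\phi_{\mathfrak g}(x_i)\otimes[y_i,x_j]\otimes\phi_{\mathfrak g}(y_j)+\phi_{\mathfrak g}(x_i)\otimes\phi_{\mathfrak g}(x_j)\otimes[y_i,y_j])$; the classical Hom-Yang-Baxter equation is $[r,r]_{\mathfrak g}=0$. A Hom-Lie bialgebra $(\mathfrak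 g,\Delta)$: weakly involutive $\mathfrak g$ and $\Delta:\mathfrak g\to\mathfrak g\otimes\mathfrak g$ such that $(\mathfrak g^*,[\cdot,\cdot]_{\mathfrak g^*},\phi_{\mathfrak g}^* )$ with $\langle[a,b]_{\mathfrak g^*},x\rangle=\langle\Delta(x),a\otimes b\rangle$ is a weakly involutive Hom-Lie algebra and $\Delta[x,y]=\mathrm{ad}_{\phi_{\mathfrak g}(x)}\Delta(y)-\mathrm{ad}_{\phi_{\mathfrak g}(y)}\Delta(x)$. It is coboundary if $\Delta(x)=\mathrm{ad}_xr$ with $(\phi_{\mathfrak g}\otimes\mathrm{Id})r=(\mathrm{Id}\otimes\phi_{\mathfrak g})r$, and quasitriangular if moreover $r$ solves the classical Hom-Yang-Baxter equation. *)

From HB Require Import structures.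
From mathcomp Require Import all_boot all_order all_algebra.
Set Implicit Arguments. Unset Strict Implicit. Unset Printing Implicit Defensive.
Import GRing.Theory.
Local Open Scope ring_scope.

Section HomLie.
Variables (K : fieldType) (V : lmodType K).

Definition is_HomLie (br : V -> V -> V) (phi : V -> V) : Prop :=
  [/\ (forall (a : K) x y z, br (a *: x + y) z = a *: br x z + br y z),
      (forall (a : K) x y z, br z (a *: x + y) = a *: br z x + br z y),
      (forall (a : K) x y, phi (a *: x + y) = a *: phi x + phi y),
      (forall x y, br x y = - br y x) &
      (forall x y, phi (br x y) = br (phi x) (phi y)) /\
      (forall x y z, br (phi x) (br y z) + br (phi y) (br z x)
                     + br (phi z) (br x y) = 0)].


Definition weakly_involutive (br : V -> V -> V) (phi : V -> V) : Prop :=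
  forall x y, br (phi (phi x)) y = br x y.

Definition HomLie_hom (W : lmodType K) (brV : V -> V -> V) (phiV : V -> V)
    (brW : W -> W -> W) (phiW : W -> W) (f : V -> W) : Prop :=
  (forall x y, f (brV x y) = brW (f x) (f y)) /\
  (forall x, f (phiV x) = phiW (f x)).
End HomLie.

(* g is identified with 'cV[K]_n via a basis e_i := E i.
   g^* is identified with 'cV[K]_n via the dual basis; the pairing is
   <a, x> = \sum_i a_i x_i.
   g (x) g is identified with 'M[K]_n via x (x) y |-> x *m y^T,
   so that <t, a (x) b> = a^T t b and (A (x) B) t = A t B^T.
   phi_g is given by a matrix P : phi_g x = P *m x; then phi_g^* a = P^T *m a. *)
Section FinDim.
Variables (K : fieldType) (n : nat).
Notation V := 'cV[K]_n.

Definition E (i : 'I_n) : V := delta_mx i 0.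

Definition pair (a x : V) : K := (a^T *m x) 0 0.

Definition pair2 (t : 'M[K]_n) (a b : V) : K := (a^T *m t *m b) 0 0.

Definition phimap (P : 'M[K]_n) : V -> V := fun x => P *m x.

Definition dualmap (P : 'M[K]_n) : V -> V := fun a => P^T *m a.

Definition admx (br : V -> V -> V) (z : V) : 'M[K]_n :=
  \matrix_(i, j) (br z (E j)) i 0.

(* ad_z t = (ad_z (x) phi + phi (x) ad_z) t *)
Definition adT (br : V -> V -> V) (P : 'M[K]_n) (z : V) (t : 'M[K]_n)
  : 'M[K]_n :=
  admx br z *m t *m P^T + P *m t *m (admx br z)^T.

Definition dual_br (Delta : V -> 'M[K]_n) (a b : V) : V :=
  \col_i pair2 (Delta (E i)) a b.

Definition rsharp (r : 'M[K]_n) (a : V) : V :=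
  \col_j pair2 r a (E j).

(* [r,r]_g = 0, written in coordinates: r = \sum_{i,k} r_{ik} e_i (x) e_k,
   and [r,r] has (p,q,s)-coordinate given below. *)
Definition CHYBE (br : V -> V -> V) (P : 'M[K]_n) (r : 'M[K]_n) : Prop :=
  forall p q s : 'I_n,
    \sum_(i < n) \sum_(j < n) \sum_(k < n) \sum_(l < n)
      r i k * r j l *
      ( (br (E i) (E j)) p 0 * (P *m E k) q 0 * (P *m E l) s 0
      + (P *m E i) p 0 * (br (E k) (E j)) q 0 * (P *m E l) s 0
      + (P *m E i) p 0 * (P *m E j) q 0 * (br (E k) (E l)) s 0 ) = 0.

Definition HomLie_bialgebra (br : V -> V -> V) (P : 'M[K]_n)
    (Delta : V -> 'M[K]_n) : Prop :=
  [/\ is_HomLie br (phimap P), weakly_involutive br (phimap P),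
      is_HomLie (dual_br Delta) (dualmap P),
      weakly_involutive (dual_br Delta) (dualmap P) &
      forall x y, Delta (br x y)
                  = adT br P (P *m x) (Delta y) - adT br P (P *m y) (Delta x)].

Definition quasitriangular (br : V -> V -> V) (P : 'M[K]_n) (r : 'M[K]_n)
    : Prop :=
  [/\ HomLie_bialgebra br P (fun x => adT br P x r),
      P *m r = r *m P^T & CHYBE br P r].
End FinDim.

From mathcomp Require Import all_boot all_order all_algebra.
From mathcomp Require Import ring.
Set Implicit Arguments. Unset Strict Implicit. Unset Printing Implicit Defensive.
Import GRing.Theory.
Local Open Scope ring_scope.

(* In matrices, r^# phi^* is F := (P r)^T, and P r = r P^T turns F into
   P r^T, which intertwines phi^* and phi.  Pairing F [a,b]_* with e_t gives
   <a, [G e_t, G b]> + <b, [G e_t, F a]> with G := r P^T = F^T; after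
   skew-symmetry, its difference with <e_t, [F a, F b]> is the component
   <[r,r]_g, a (x) b (x) e_t> of the Hom-Yang-Baxter tensor, which is 0. *)

Section Coordinates.
Variables (K : fieldType) (n : nat).
Local Notation V := 'cV[K]_n.
Local Notation E := (@E K n).

Lemma mulmxE_basis (M : 'M[K]_n) k i : (M *m E k) i 0 = M i k.
Proof. by rewrite -colE mxE. Qed.

Lemma cV_sum_E (x : V) : x = \sum_i x i 0 *: E i.
Proof.
rewrite {1}(matrix_sum_delta x); apply: eq_bigr => i _.
by rewrite big_ord1.
Qed.

Lemma mulmx_sum_scale (M : 'M[K]_n) (c : 'I_n -> K) (v : 'I_n -> V) :
  M *m (\sum_i c i *: v i) = \sum_i c i *: (M *m v i).
Proof. by rewrite mulmx_sumr; apply: eq_bigr => i _; rewrite scalemxAr. Qed.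

Lemma pairE (a x : V) : pair a x = \sum_i a i 0 * x i 0.
Proof. by rewrite /pair mxE; apply: eq_bigr => i _; rewrite mxE. Qed.

Lemma pairC (a x : V) : pair a x = pair x a.
Proof. by rewrite !pairE; apply: eq_bigr => i _; rewrite mulrC. Qed.

Lemma pair_El p (x : V) : pair (E p) x = x p 0.
Proof. by rewrite pairC /pair -colE !mxE. Qed.

Lemma pairNr (a x : V) : pair a (- x) = - pair a x.
Proof. by rewrite /pair mulmxN mxE. Qed.

Lemma pair_sumr (a : V) (c : 'I_n -> K) (v : 'I_n -> V) :
  pair a (\sum_i c i *: v i) = \sum_i c i * pair a (v i).
Proof.
rewrite /pair mulmx_sumr summxE; apply: eq_bigr => i _.
by rewrite -scalemxAr mxE.
Qed.

Lemma pair_suml (a : V) (c : 'I_n -> K) (v : 'I_n -> V) :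
  pair (\sum_i c i *: v i) a = \sum_i c i * pair (v i) a.
Proof. by rewrite pairC pair_sumr; apply: eq_bigr => i _; rewrite pairC. Qed.

Lemma mulmx_coord_pair (M : 'M[K]_n) (v : V) t :
  (M *m v) t 0 = pair v (M^T *m E t).
Proof.
rewrite pairE mxE; apply: eq_bigr => i _.
by rewrite mulmxE_basis mxE mulrC.
Qed.

Lemma pair2_trmx (M : 'M[K]_n) (a b : V) : pair2 M a b = pair2 M^T b a.
Proof.
by rewrite /pair2 -[in RHS](trmxK (_ *m a)) [in RHS]mxE !trmx_mul !trmxK mulmxA.
Qed.

Lemma mul_trmx_E_coord (A B : 'M[K]_n) i j :
  (A *m B^T *m E j) i 0 = \sum_k A i k * B j k.
Proof. by rewrite mulmxE_basis mxE; apply: eq_bigr => k _; rewrite mxE. Qed.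

Lemma trmx_mul_E_coord (A B : 'M[K]_n) i j :
  ((A *m B)^T *m E j) i 0 = \sum_k A j k * B k i.
Proof. by rewrite mulmxE_basis !mxE. Qed.

Lemma rsharpE (r : 'M[K]_n) (a : V) : rsharp r a = r^T *m a.
Proof.
apply/matrixP => j k; rewrite (ord1 k) !mxE /pair2 -colE !mxE.
by apply: eq_bigr => i _; rewrite !mxE mulrC.
Qed.

End Coordinates.

Section BilinearBracket.
Variables (K : fieldType) (n : nat).
Local Notation V := 'cV[K]_n.
Local Notation E := (@E K n).
Variable br : V -> V -> V.
Hypothesis br_linl :
  forall (a : K) x y z, br (a *: x + y) z = a *: br x z + br y z.
Hypothesis br_linr :
  forall (a : K) x y z, br z (a *: x + y) = a *: br z x + br z y.

Lemma br_suml (c : 'I_n -> K) (u : 'I_n -> V) z :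
  br (\sum_i c i *: u i) z = \sum_i c i *: br (u i) z.
Proof.
apply: (big_rec2 (fun A B => br B z = A)) => [|i y1 y2 _ <-]; last exact: br_linl.
by have := br_linl (-1) 0 0 z; rewrite scaler0 add0r scaleN1r addNr.
Qed.

Lemma br_sumr (c : 'I_n -> K) (u : 'I_n -> V) z :
  br z (\sum_i c i *: u i) = \sum_i c i *: br z (u i).
Proof.
apply: (big_rec2 (fun A B => br z B = A)) => [|i y1 y2 _ <-]; last exact: br_linr.
by have := br_linr (-1) 0 0 z; rewrite scaler0 add0r scaleN1r addNr.
Qed.

Lemma admx_mul z (v : V) : admx br z *m v = br z v.
Proof.
rewrite [in RHS](cV_sum_E v) br_sumr; apply/matrixP => i j.
rewrite (ord1 j) !mxE summxE; apply: eq_bigr => k _.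
by rewrite !mxE mulrC.
Qed.

Lemma br_coord (u v : V) p :
  br u v p 0 = \sum_i \sum_j u i 0 * v j 0 * br (E i) (E j) p 0.
Proof.
rewrite [in LHS](cV_sum_E u) br_suml summxE; apply: eq_bigr => i _.
rewrite [in LHS](cV_sum_E v) br_sumr mxE summxE big_distrr /=.
by apply: eq_bigr => j _; rewrite mxE mulrA.
Qed.

Variables (P r : 'M[K]_n).
Local Notation G := (r *m P^T).
Local Notation F := ((P *m r)^T).

Lemma dual_br_pair (a b x : V) :
  pair (dual_br (fun z => adT br P z r) a b) x
  = pair a (br x (G *m b)) + pair b (br x (F *m a)).
Proof.
rewrite pairE [in RHS](cV_sum_E x) !br_suml !pair_sumr -big_split /=.
apply: eq_bigr => i _; rewrite mxE -mulrDr mulrC; congr (_ * _).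
rewrite /adT /pair2 mulmxDr mulmxDl mxE; congr (_ + _).
  by rewrite /pair -admx_mul !mulmxA.
rewrite -/(pair2 _ a b) pair2_trmx /pair2 /pair -admx_mul.
by rewrite !trmx_mul !trmxK !mulmxA.
Qed.

(* The value <[r,r]_g, a (x) b (x) c> of the Hom-Yang-Baxter tensor. *)
Definition hybe_form (a b c : V) : K :=
  pair a (br (G *m b) (G *m c)) + pair b (br (F *m a) (G *m c))
  + pair c (br (F *m a) (F *m b)).

Lemma hybe_term1 p q s :
  pair (E p) (br (G *m E q) (G *m E s)) =
  \sum_i \sum_j \sum_k \sum_l
    r i k * r j l * (br (E i) (E j) p 0 * (P *m E k) q 0 * (P *m E l) s 0).
Proof.
rewrite pair_El br_coord; apply: eq_bigr => i _; apply: eq_bigr => j _.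
rewrite !mul_trmx_E_coord big_distrlr /= mulr_suml; apply: eq_bigr => k _.
by rewrite mulr_suml; apply: eq_bigr => l _; rewrite !mulmxE_basis; ring.
Qed.

Lemma hybe_term2 p q s :
  pair (E q) (br (F *m E p) (G *m E s)) =
  \sum_i \sum_j \sum_k \sum_l
    r i k * r j l * ((P *m E i) p 0 * br (E k) (E j) q 0 * (P *m E l) s 0).
Proof.
under [RHS]eq_bigr do rewrite exchange_big.
rewrite [RHS]exchange_big; under [RHS]eq_bigr do rewrite exchange_big.
rewrite pair_El br_coord; apply: eq_bigr => k _; apply: eq_bigr => j _.
rewrite trmx_mul_E_coord mul_trmx_E_coord big_distrlr /= mulr_suml.
apply: eq_bigr => i _; rewrite mulr_suml; apply: eq_bigr => l _.
by rewrite !mulmxE_basis; ring.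
Qed.

Lemma hybe_term3 p q s :
  pair (E s) (br (F *m E p) (F *m E q)) =
  \sum_i \sum_j \sum_k \sum_l
    r i k * r j l * ((P *m E i) p 0 * (P *m E j) q 0 * br (E k) (E l) s 0).
Proof.
under [RHS]eq_bigr do rewrite exchange_big.
rewrite [RHS]exchange_big.
under [RHS]eq_bigr do under eq_bigr do rewrite exchange_big.
under [RHS]eq_bigr do rewrite exchange_big.
rewrite pair_El br_coord; apply: eq_bigr => k _; apply: eq_bigr => l _.
rewrite !trmx_mul_E_coord big_distrlr /= mulr_suml.
apply: eq_bigr => i _; rewrite mulr_suml; apply: eq_bigr => j _.
by rewrite !mulmxE_basis; ring.
Qed.

Lemma hybe_form_basisE p q s :
  hybe_form (E p) (E q) (E s) =
  \sum_i \sum_j \sum_k \sum_l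
    r i k * r j l *
    ( br (E i) (E j) p 0 * (P *m E k) q 0 * (P *m E l) s 0
    + (P *m E i) p 0 * br (E k) (E j) q 0 * (P *m E l) s 0
    + (P *m E i) p 0 * (P *m E j) q 0 * br (E k) (E l) s 0 ).
Proof.
rewrite /hybe_form hybe_term1 hybe_term2 hybe_term3.
rewrite -!big_split; apply: eq_bigr => i _.
rewrite -!big_split; apply: eq_bigr => j _.
rewrite -!big_split; apply: eq_bigr => k _.
by rewrite -!big_split; apply: eq_bigr => l _; rewrite !mulrDr.
Qed.

Lemma hybe_form_suml (c : 'I_n -> K) (v : 'I_n -> V) b w :
  hybe_form (\sum_i c i *: v i) b w = \sum_i c i * hybe_form (v i) b w.
Proof.
rewrite /hybe_form mulmx_sum_scale !br_suml !pair_sumr pair_suml.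
by rewrite -!big_split; apply: eq_bigr => i _; rewrite !mulrDr.
Qed.

Lemma hybe_form_sumr (c : 'I_n -> K) (v : 'I_n -> V) a w :
  hybe_form a (\sum_i c i *: v i) w = \sum_i c i * hybe_form a (v i) w.
Proof.
rewrite /hybe_form !mulmx_sum_scale br_suml br_sumr !pair_sumr pair_suml.
by rewrite -!big_split; apply: eq_bigr => i _; rewrite !mulrDr.
Qed.

Hypothesis chybe : CHYBE br P r.

Lemma hybe_form_eq0 (a b : V) s : hybe_form a b (E s) = 0.
Proof.
rewrite (cV_sum_E a) hybe_form_suml big1 // => p _.
rewrite (cV_sum_E b) hybe_form_sumr big1 ?mulr0 // => q _.
by rewrite hybe_form_basisE chybe mulr0.
Qed.

Hypothesis br_skew : forall x y, br x y = - br y x.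
Hypothesis phi_r : P *m r = r *m P^T.

Lemma rsharp_dual_br_morph (a b : V) :
  F *m dual_br (fun z => adT br P z r) a b = br (F *m a) (F *m b).
Proof.
apply/matrixP => t j; rewrite (ord1 j) mulmx_coord_pair trmxK.
rewrite [in P *m r *m _]phi_r dual_br_pair -pair_El.
rewrite (br_skew _ (G *m b)) (br_skew _ (F *m a)) !pairNr.
by rewrite -[RHS]subr0 -(hybe_form_eq0 a b t) /hybe_form; ring.
Qed.

End BilinearBracket.

Lemma rsharp_dual_phi_comm (K : fieldType) n (P r : 'M[K]_n) (a : 'cV[K]_n) :
  P *m r = r *m P^T -> (P *m r)^T *m (P^T *m a) = P *m ((P *m r)^T *m a).
Proof.
move=> phi_r; have F_eq : (P *m r)^T = P *m r^T by rewrite phi_r trmx_mul trmxK.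
by rewrite mulmxA {1}F_eq trmx_mul !mulmxA.
Qed.

Theorem corollary4p10 (K : fieldType) (n : nat)
    (br : 'cV[K]_n -> 'cV[K]_n -> 'cV[K]_n) (P r : 'M[K]_n) :
  quasitriangular br P r ->
  HomLie_hom (dual_br (fun x => adT br P x r)) (dualmap P)
             br (phimap P)
             (fun a => rsharp r (dualmap P a)).
Proof.
move=> [[[br_linl br_linr _ br_skew _] _ _ _ _] phi_r chybe].
have rsharp_dualE a : rsharp r (dualmap P a) = (P *m r)^T *m a.
  by rewrite rsharpE /dualmap mulmxA trmx_mul.
split=> [a b | a]; rewrite /phimap !rsharp_dualE.
- exact: rsharp_dual_br_morph.
- by rewrite /dualmap rsharp_dual_phi_comm.
Qed.
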